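(* Let $\{F_n\}_{n\geq 0}$ be a sequence of positive integers with $F_0=1$, let $\Pi$ be the cobweb poset it determines, and for $n\geq 0$ let $P_n$ be the finite cobweb subposet of rank $n$. The characteristic polynomial of $P_n$, $\chi_{P_n}(t)=\sum_{x\in P_n}\mu(0,x)\,t^{n-r(x)}$, is given by $$\chi_{P_n}(t)=t^n+\sum_{k=1}^{n}(-1)^kF_k\prod_{i=1}^{k-1}(F_i-1)\,t^{n-k}.$$
   Context: Cobweb poset: given the sequence $\{F_n\}_{n\ge 0}$, for $s\geq 0$ let the $s$-th level be $\Phi_s=\{\langle j,s\rangle : 1\leq j\leq F_s\}$, and let $V=\bigcup_{s\geq 0}\Phi_s$. The cobweb poset is $\Pi=(V,\leq)$ where for $x=\langle s,t\rangle$, $y=\langle u,v\rangle$ one has $x\leq y$ iff ($t<v$) or ($t=v$ and $s=u$). Its rank function is $r(x)=s$ for $x\in\Phi_s$. For $n\geq 0$, $P_n$ is the set $\bigcup_{0\leq s\leq n}\Phi_s$ with the induced order; it has unique minimal element $0=\langle 1,0\rangle$ and length $n$. $\mu$ denotes the M\''obius function of $P_n$. Empty products equal $1$. *)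

From mathcomp Require Import all_boot all_order all_algebra.
Set Implicit Arguments. Unset Strict Implicit. Unset Printing Implicit Defensive.
Import GRing.Theory Num.Theory.
Local Open Scope ring_scope.

(* The finite cobweb subposet P_n.  An element [Tagged _ j : cobweb F n]
   with tag s : 'I_n.+1 and j : 'I_(F s) represents <j+1, s> in Phi_s. *)
Definition cobweb (F : nat -> nat) (n : nat) : finType :=
  {s : 'I_n.+1 & 'I_(F s)}.

Definition crank (F : nat -> nat) (n : nat) (x : cobweb F n) : nat := tag x.

Definition cle (F : nat -> nat) (n : nat) : rel (cobweb F n) :=
  fun x y => (crank x < crank y)%N || (x == y).

(* The fuel k bounds the recursion depth; #|T| is always enough. *)
Fixpoint mobius_fuel (T : finType) (le : rel T) (k : nat) (x y : T) : int :=
  match k with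
  | 0 => 0
  | k'.+1 =>
    if x == y then 1
    else if le x y then
      - \sum_(z : T | le x z && le z y && (z != y)) mobius_fuel le k' x z
    else 0
  end.

Definition mobius (T : finType) (le : rel T) (x y : T) : int :=
  mobius_fuel le #|T| x y.

(* characteristic polynomial chi_{P_n}(t) = sum_x mu(0,x) t^(n - r(x)),
   where z0 is the minimal element 0 = <1,0> *)
Definition cobweb_charpoly (F : nat -> nat) (n : nat) (z0 : cobweb F n)
  : {poly int} :=
  \sum_(x : cobweb F n) (mobius (@cle F n) z0 x)%:P * 'X^(n - crank x).

(* Every element of rank s > 0 lies above all of P_(s-1) and above nothing
   else, so mu(0, x) depends only on s = r(x) and satisfies
   mu_s = - sum_(t < s) F_t mu_t.  Since F_0 = 1 this recursion is solved by
   mu_s = (-1)^s prod_(1 <= i < s) (F_i - 1); grouping the sum defining the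
   characteristic polynomial by levels gives the formula. *)
From mathcomp Require Import all_boot all_order all_algebra.
From mathcomp Require Import ring.
Import GRing.Theory Num.Theory.
Local Open Scope ring_scope.

Lemma big_cobweb_rank (V : nmodType) (F : nat -> nat) (n : nat) (G : nat -> V) :
  \sum_(x : cobweb F n) G (crank x) = \sum_(s < n.+1) G s *+ F s.
Proof.
rewrite /crank /cobweb.
rewrite -[LHS]/(\sum_(p : {s : 'I_n.+1 & 'I_(F s)} | true && true) G (tag p)).
rewrite -(@sig_big_dep V 0 +%R 'I_n.+1 (fun s => 'I_(F s)) xpredT (fun _ => xpredT)
  (fun s _ => G s)) /=.
by apply: eq_bigr => s _; rewrite sumr_const card_ord.
Qed.

Definition cobweb_mu (F : nat -> nat) (s : nat) : int :=
  (-1) ^+ s * \prod_(1 <= i < s) ((F i)%:Z - 1).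

Lemma cobweb_mu0 (F : nat -> nat) : cobweb_mu F 0 = 1.
Proof. by rewrite /cobweb_mu big_geq. Qed.

Lemma sum_cobweb_mu (F : nat -> nat) (hF0 : F 0%N = 1%N) (s : nat) :
  \sum_(t < s.+1) cobweb_mu F t *+ F t = - cobweb_mu F s.+1.
Proof.
elim: s => [|s IH]; first by rewrite big_ord1 /cobweb_mu hF0 !big_geq.
rewrite big_ord_recr /= IH /cobweb_mu [in RHS]big_nat_recr //= -mulr_natr !exprS.
ring.
Qed.

Section CobwebMobius.

Variables (F : nat -> nat) (n : nat).
Hypothesis hF0 : F 0%N = 1%N.

Lemma crank0_inj {x y : cobweb F n} : crank x = 0%N -> crank y = 0%N -> x = y.
Proof.
case: x => [s j]; case: y => [t k]; rewrite /crank /= => s0 t0.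
have est : s = t by apply: val_inj; rewrite /= s0 t0.
subst t; have Fs1 : F s = 1%N by rewrite s0.
suff -> : j = k by [].
have lt1 (i : 'I_(F s)) : (val i < 1)%N by rewrite -Fs1 ltn_ord.
by apply: val_inj; move: (lt1 j) (lt1 k); rewrite !ltnS !leqn0 => /eqP-> /eqP->.
Qed.

Lemma crank_lt_card (y : cobweb F n) : (forall m, (0 < F m)%N) ->
  (crank y < #|cobweb F n|)%N.
Proof.
move=> hpos; apply: leq_trans (ltn_ord (tag y)) _.
pose lev (s : 'I_n.+1) : cobweb F n :=
  Tagged (fun i : 'I_n.+1 => 'I_(F i)) (Ordinal (hpos s)).
have lev_inj : injective lev by move=> a b /(congr1 tag).
by have := leq_card lev lev_inj; rewrite card_ord.
Qed.

Variable z0 : cobweb F n.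
Hypothesis hz0 : crank z0 = 0%N.

Lemma cle_interval_rank {y : cobweb F n} (z : cobweb F n) : (0 < crank y)%N ->
  cle z0 z && cle z y && (z != y) = (crank z < crank y)%N.
Proof.
move=> y_gt0; rewrite /cle hz0.
have [zy | yz] := ltnP (crank z) (crank y).
  have -> : z != y by apply: contraTneq zy => ->; rewrite ltnn.
  rewrite /= !andbT; case: posnP => // z0r.
  by rewrite (crank0_inj z0r hz0) eqxx.
by rewrite /= -andbA andbN andbF.
Qed.

Lemma mobius_fuel_cobweb (k : nat) (y : cobweb F n) : (crank y < k)%N ->
  mobius_fuel (@cle F n) k z0 y = cobweb_mu F (crank y).
Proof.
elim: k y => [//|k IH] y yk /=.
case: eqP => [<-|ne]; first by rewrite hz0 cobweb_mu0.
have y_gt0 : (0 < crank y)%N.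
  by rewrite lt0n; apply/eqP => y0; apply: ne; exact: crank0_inj.
have -> : cle z0 y by rewrite /cle hz0 y_gt0.
rewrite (eq_bigl _ _ (cle_interval_rank ^~ y_gt0)).
rewrite (eq_bigr (fun z => cobweb_mu F (crank z))); last first.
  by move=> z zy; apply: IH; exact: leq_trans zy yk.
rewrite big_mkcond /=.
rewrite (big_cobweb_rank _ _ _ (fun s => if (s < crank y)%N then cobweb_mu F s else 0)).
rewrite (eq_bigr (fun s : 'I_n.+1 =>
  if (s < crank y)%N then cobweb_mu F s *+ F s else 0)); last first.
  by move=> s _; case: ifP; rewrite ?mul0rn.
rewrite -big_mkcond -(big_ord_widen _ (fun s => cobweb_mu F s *+ F s)) /=; last first.
  exact/ltnW/ltn_ord.
by case: (crank y) y_gt0 => // s _; rewrite sum_cobweb_mu // opprK.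
Qed.

Lemma mobius_cobweb (y : cobweb F n) : (forall m, (0 < F m)%N) ->
  mobius (@cle F n) z0 y = cobweb_mu F (crank y).
Proof. by move=> hpos; apply: mobius_fuel_cobweb; exact: crank_lt_card. Qed.

End CobwebMobius.

Theorem mainTheorem2 (F : nat -> nat) (hpos : forall m, (0 < F m)%N)
  (hF0 : F 0%N = 1%N) (n : nat) (z0 : cobweb F n) (hz0 : crank z0 = 0%N) :
  cobweb_charpoly z0 =
  'X^n + \sum_(1 <= k < n.+1)
           ((-1) ^+ k * (F k)%:Z * \prod_(1 <= i < k) ((F i)%:Z - 1))%:P
           * 'X^(n - k).
Proof.
rewrite /cobweb_charpoly.
rewrite (eq_bigr (fun x => (cobweb_mu F (crank x))%:P * 'X^(n - crank x))); last first.
  by move=> x _; rewrite mobius_cobweb.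
rewrite (big_cobweb_rank _ _ _ (fun s => (cobweb_mu F s)%:P * 'X^(n - s))).
rewrite big_ord_recl /= cobweb_mu0 hF0 subn0 mul1r mulr1n.
congr (_ + _); rewrite big_add1 /= big_mkord; apply: eq_bigr => i _.
rewrite /bump /= add1n -mulrnAl -polyCMn /cobweb_mu -mulr_natr natz.
by congr (_%:P * _); ring.
Qed.
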